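(* Let $d\geq 1$, let $Q\subset\mathbb{Z}_+^d$ be a lower set with $|Q|=n$, and let $k$ be a positive integer. Then the number $C(Q,k,d)$ of lower sets $Q'\subset Q$ with $|Q'|\geq n-k$ satisfies $$C(Q,k,d)<\Big(\max\Big\{8,\frac{4eT(n)}{k}\Big\}\Big)^k.$$
   Context: $\mathbb{Z}_+=\{0,1,2,\dots\}$. A set $Q\subset\mathbb{Z}_+^d$ is a lower set if whenever $q\in Q$ and $q'\in\mathbb{Z}_+^d$ satisfies $q'_i\leq q_i$ for all $i$, then $q'\in Q$. For $q,q'\in\mathbb{Z}_+^d$ write $q\succ q'$ if $q_i\geq q'_i$ for all $i$. For a lower set $Q$, $M(Q)$ denotes the set of all $q'\in Q$ such that no $q\in Q\setminus\{q'\}$ satisfies $q\succ q'$ (the maximal available subset of $Q$). $T(n):=\max\{|M(Q)|: Q\subset\mathbb{Z}_+^d \text{ a lower set},\ |Q|=n\}$. *)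

From Stdlib Require Import Reals ClassicalDescription.
From mathcomp Require Import all_boot finmap.
Set Implicit Arguments. Unset Strict Implicit. Unset Printing Implicit Defensive.
Local Open Scope fset_scope.

Definition point (d : nat) := {ffun 'I_d -> nat}.

Definition succeq d (q q' : point d) : bool := [forall i, q' i <= q i].

Definition lower d (Q : {fset point d}) : Prop :=
  forall q q' : point d, q \in Q -> (forall i, q' i <= q i) -> q' \in Q.

Definition asb (P : Prop) : bool := if excluded_middle_informative P then true else false.

Definition Mset d (Q : {fset point d}) : {fset point d} :=
  [fset q' in Q | ~~ has (fun q => (q != q') && succeq q q') (enum_fset Q)].

Definition is_T d (n t : nat) : Prop :=
  (exists Q : {fset point d}, lower Q /\ #|` Q| = n /\ #|` Mset Q| = t) /\
  (forall Q : {fset point d}, lower Q -> #|` Q| = n -> #|` Mset Q| <= t).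

Definition Ccount d (Q : {fset point d}) (k : nat) : nat :=
  #|` [fset Q' in fpowerset Q | asb (lower Q') && (#|` Q| - k <= #|` Q'|)] |.

From Stdlib Require Import Reals Lra ClassicalDescription.
From mathcomp Require Import all_boot finmap zify.

(* Every lower subset P of Q satisfies |M(P)| <= T(n): adding to P its first missing point
   on a coordinate axis keeps it a lower set and costs at most one maximal element while
   creating one, so P grows to a lower set of size n with at least as many maximal elements.
   Lower sets Q' of Q missing at most k points are then counted by deciding the maximal
   elements one at a time: each is either kept for good or removed, and a removal uses up
   one of the k points without increasing b + T(n) - |M(P)|, where b is the number of
   undecided maximal elements, because |M(P \ x)| <= T(n). This gives
   C(Q,k,d) <= binom(T(n) + k, k) <= (T(n) + k)^k / k!, and k^k <= e^(k-1) k! turns it into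
   C(Q,k,d) < (e (T(n) + k) / k)^k, where e (T + k) / k <= max(8, 4eT/k) according as
   k <= 3T or not. *)

Set Implicit Arguments. Unset Strict Implicit. Unset Printing Implicit Defensive.
Local Open Scope fset_scope.

Lemma asbP (A : Prop) : reflect A (asb A).
Proof. by rewrite /asb; case: excluded_middle_informative; constructor. Qed.

Lemma cardfs_le1 (K : choiceType) (A : {fset K}) a :
  (forall b, b \in A -> b = a) -> (#|` A| <= 1)%N.
Proof.
move=> eq_a; rewrite -(cardfs1 a); apply/fsubset_leq_card/fsubsetP => b /eq_a ->.
exact: fset11.
Qed.

Lemma leq_ffact_exp n m : (n ^_ m <= n ^ m)%N.
Proof.
elim: m => // m IHm; rewrite ffactnSr expnSr.
by apply: leq_mul; [apply: IHm | apply: leq_subr].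
Qed.

Section LowerSets.
Variable d : nat.
Implicit Types (p q x z : point d) (P B : {fset point d}).

Lemma succeqP p q : reflect (forall i, q i <= p i)%N (succeq p q).
Proof. exact: forallP. Qed.

Lemma succeq_refl p : succeq p p.
Proof. by apply/succeqP. Qed.

Lemma succeq_trans p q z : succeq p q -> succeq q z -> succeq p z.
Proof. by move=> /succeqP pq /succeqP qz; apply/succeqP => i; apply: leq_trans (qz i) (pq i). Qed.

Lemma succeq_anti p q : succeq p q -> succeq q p -> p = q.
Proof.
by move=> /succeqP pq /succeqP qp; apply/ffunP => i; apply/eqP; rewrite eqn_leq pq qp.
Qed.

Lemma MsetP P q :
  reflect (q \in P /\ forall p, p \in P -> succeq p q -> p = q) (q \in Mset P).
Proof.
rewrite /Mset !inE /=; apply: (iffP andP) => -[qP qmax]; split=> //.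
  move=> p pP pq; apply: contraNeq qmax => npq.
  by apply/hasP; exists p; rewrite // npq.
apply/hasPn => p pP; rewrite negb_and negbK orbC.
by case: (boolP (succeq p q)) => //= /(qmax p pP) ->.
Qed.

Lemma Mset_sub P : Mset P `<=` P.
Proof. by apply/fsubsetP => q /MsetP[]. Qed.

Lemma in_Mset_fsubset P P' z : P' `<=` P -> z \in P' -> z \in Mset P -> z \in Mset P'.
Proof.
move=> /fsubsetP P'P zP' /MsetP[_ zmax]; apply/MsetP; split=> // p /P'P; exact: zmax.
Qed.

Lemma Mset_fset1U P x z : ~~ succeq x z -> z \in Mset P -> z \in Mset (x |` P).
Proof.
move=> nxz /MsetP[zP zmax]; apply/MsetP; split=> [|p]; first by rewrite in_fset1U zP orbT.
by rewrite in_fset1U => /orP[/eqP-> /(negP nxz)|/zmax].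
Qed.

Lemma exists_Mset_succeq P q : q \in P -> exists2 p, p \in Mset P & succeq p q.
Proof.
pose above q := [fset p in P | succeq p q].
have [n] := ubnP #|` above q|; elim: n q => // n IHn q lt_n qP.
case: (boolP (q \in Mset P)) => [qM|]; first by exists q; last exact: succeq_refl.
rewrite /Mset !inE /= qP negbK => /hasP[p pP /andP[npq pq]].
have [|r rM rp] := IHn p _ pP; last by exists r; last exact: succeq_trans rp pq.
rewrite -ltnS (leq_trans _ lt_n) // ltnS; apply: fproper_ltn_card.
rewrite fproperEneq; apply/andP; split.
  apply: contraNneq npq => eq_above.
  have : q \in above p by rewrite eq_above !inE /= qP succeq_refl.
  by rewrite !inE /= => /andP[_ qp]; apply/eqP/succeq_anti.
apply/fsubsetP => z; rewrite !inE /= => /andP[-> zp]; exact: succeq_trans zp pq.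
Qed.

Lemma lower_fsetD1 P x : lower P -> x \in Mset P -> lower (P `\ x).
Proof.
move=> lowP /MsetP[_ xmax] q q'; rewrite !inE => /andP[qx qP] q'q.
rewrite (lowP q q' qP q'q) andbT; apply: contra_neq qx => eq_q'x.
by apply: xmax => //; apply/succeqP; rewrite -eq_q'x.
Qed.

Lemma lower_Mset_eq P P' : lower P' -> P' `<=` P -> Mset P `<=` P' -> P' = P.
Proof.
move=> lowP' P'P MP'; apply/eqP; rewrite eqEfsubset P'P; apply/fsubsetP => q qP.
have [p pM /succeqP pq] := exists_Mset_succeq qP.
exact: lowP' (fsubsetP MP' p pM) pq.
Qed.

Lemma Mset_fsetD1 P x : Mset P `\ x `<=` Mset (P `\ x).
Proof.
apply/fsubsetP => z; rewrite in_fsetD1 => /andP[zx zM].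
have zPx : z \in P `\ x by rewrite in_fsetD1 zx (fsubsetP (Mset_sub P)).
exact: in_Mset_fsubset (fsubD1set P x) zPx zM.
Qed.

(* B holds the maximal elements of P that are still undecided; the others must be kept. *)
Definition lower_subsets P B j : {fset {fset point d}} :=
  [fset P' in fpowerset P |
    asb (lower P') && (#|` P| - j <= #|` P'|)%N && (Mset P `\` B `<=` P')].

Lemma lower_subsetsP P B j P' :
  reflect [/\ P' `<=` P, lower P', (#|` P| - j <= #|` P'|)%N & Mset P `\` B `<=` P']
          (P' \in lower_subsets P B j).
Proof.
rewrite !inE /= fpowersetE -andbA.
by apply: (iffP and4P) => -[? /asbP ? ? ?]; split=> //; apply/asbP.
Qed.

Lemma Ccount_lower_subsets Q k : Ccount Q k = #|` lower_subsets Q (Mset Q) k|.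
Proof.
rewrite /Ccount /lower_subsets fsetDv; congr #|` _|.
by apply/fsetP => P'; rewrite !inE fsub0set andbT.
Qed.

Lemma lower_subsets_split P B j x : x \in P -> x \in B ->
  lower_subsets P B j.+1 `<=`
    lower_subsets P (B `\ x) j.+1 `|` lower_subsets (P `\ x) (Mset (P `\ x) `\` (Mset P `\` B)) j.
Proof.
move=> xP xB; apply/fsubsetP => P' /lower_subsetsP[P'P lowP' cardP' MP']; rewrite inE.
case: (boolP (x \in P')) => [xP'|xP']; apply/orP; [left|right]; apply/lower_subsetsP.
  split=> //; apply/fsubsetP => z; rewrite !inE => /andP[/nandP zB zM].
  case: zB => [/negPn/eqP-> //|zB]; apply: (fsubsetP MP'); by rewrite !inE zB zM.
have P'Px : P' `<=` P `\ x.
  by apply/fsubsetP => z zP'; rewrite !inE (fsubsetP P'P) // andbT; apply: contraNneq xP' => <-.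
split=> //; first by move: cardP'; rewrite (cardfsD1 x P) xP; lia.
apply/fsubsetP => z; rewrite !in_fsetD => /andP[/nandP[/negPn zMB|/negP zM //] _].
by apply: (fsubsetP MP'); rewrite in_fsetD.
Qed.

End LowerSets.

Section Counting.
Variables (d : nat) (Q : {fset point d}) (T : nat).
Hypothesis MsetT : forall P, lower P -> P `<=` Q -> (#|` Mset P| <= T)%N.

Lemma card_lower_subsets j P B : lower P -> P `<=` Q -> B `<=` Mset P ->
  (#|` lower_subsets P B j| <= 'C(#|` B| + (T - #|` Mset P|) + j, j))%N.
Proof.
elim: j P B => [|j IHj] P B lowP PQ.
  move=> _; rewrite bin0; apply: (@cardfs_le1 _ _ P) => P' /lower_subsetsP[P'P _ + _].
  by rewrite subn0 => cardP'; apply/eqP; rewrite eqEfcard P'P.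
have [b] := ubnP #|` B|; elim: b B => // b IHb B lt_b BM.
have [->|[x xB]] := fset_0Vmem B.
  apply: leq_trans (_ : 1 <= _)%N; last by rewrite bin_gt0 leq_addl.
  apply: cardfs_le1 => P' /lower_subsetsP[P'P lowP' _]; rewrite fsetD0; exact: lower_Mset_eq.
have xM := fsubsetP BM x xB.
have xP := fsubsetP (Mset_sub P) x xM.
have lowPx := lower_fsetD1 lowP xM.
have PxQ : P `\ x `<=` Q := fsubset_trans (fsubD1set P x) PQ.
have MPB_sub : Mset P `\` B `<=` Mset (P `\ x).
  by apply: fsubset_trans (Mset_fsetD1 P x); apply: fsetDS; rewrite fsub1set.
have card_B' : (#|` Mset (P `\ x) `\` (Mset P `\` B)| + (T - #|` Mset (P `\ x)|) + j =
                #|` B `\ x| + (T - #|` Mset P|) + j.+1)%N.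
  have := fsubset_leq_card MPB_sub; have := fsubset_leq_card BM.
  have := MsetT lowP PQ; have := MsetT lowPx PxQ.
  rewrite (cardfsDS MPB_sub) (cardfsDS BM) (cardfsD1 x B) xB; lia.
rewrite (cardfsD1 x B) xB add1n !addSn binS.
apply: leq_trans (fsubset_leq_card (lower_subsets_split j xP xB)) _.
rewrite cardfsU; apply: leq_trans (leq_subr _ _) (leq_add _ _).
  apply: IHb; last exact: fsubset_trans (fsubD1set B x) BM.
  by move: lt_b; rewrite (cardfsD1 x B) xB.
by rewrite -card_B'; apply: IHj; rewrite ?fsubsetDl.
Qed.

End Counting.

Section Extension.
Variables (d : nat) (i0 : 'I_d).
Implicit Types (q : point d) (P : {fset point d}).

Definition axis_point (c : nat) : point d := [ffun i => if i == i0 then c else 0%N].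

Lemma axis_point_i0 c : axis_point c i0 = c.
Proof. by rewrite ffunE eqxx. Qed.

Lemma below_axis_point c q : succeq (axis_point c) q -> q = axis_point (q i0) /\ (q i0 <= c)%N.
Proof.
move=> /succeqP qc; split; last by have := qc i0; rewrite axis_point_i0.
apply/ffunP => i; rewrite ffunE; case: eqP => [-> //|/eqP ni0].
by have := qc i; rewrite ffunE (negbTE ni0) leqn0 => /eqP.
Qed.

Lemma axis_point_succeq c c' : (c <= c')%N -> succeq (axis_point c') (axis_point c).
Proof. by move=> le_cc'; apply/succeqP => i; rewrite !ffunE; case: eqP. Qed.

Lemma Mset_fset1U_notin P x : lower P -> x \notin P -> x \in Mset (x |` P).
Proof.
move=> lowP xP; apply/MsetP; split=> [|p]; first exact: fset1U1.
rewrite in_fset1U => /orP[/eqP-> //|pP /succeqP px].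
by move: xP; rewrite (lowP p x pP px).
Qed.

Section FirstMissingAxisPoint.
Variables (P : {fset point d}) (c : nat).
Hypotheses (cP : axis_point c \notin P) (belowP : forall c', (c' < c)%N -> axis_point c' \in P).

Lemma lower_fset1U_axis_point : lower P -> lower (axis_point c |` P).
Proof.
move=> lowP q q'; rewrite !in_fset1U => /orP[/eqP-> |qP q'q]; last first.
  by rewrite (lowP q q' qP q'q) orbT.
move=> /succeqP/below_axis_point[]; move: (q' i0) => m -> le_mc.
by case: ltngtP le_mc => // [/belowP -> _|-> _]; rewrite ?orbT ?eqxx.
Qed.

Lemma Mset_axis_fset1U :
  Mset P `<=` axis_point c.-1 |` (Mset (axis_point c |` P) `\ axis_point c).
Proof.
apply/fsubsetP => z zM; have zP := fsubsetP (Mset_sub P) z zM.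
rewrite in_fset1U in_fsetD1; case: (boolP (succeq (axis_point c) z)) => [|ncz]; last first.
  by rewrite (Mset_fset1U ncz zM) andbT; apply/orP; right; apply: contraNneq cP => <-.
move=> /below_axis_point[ez le_zc].
have lt_zc : (z i0 < c)%N.
  by rewrite ltn_neqAle le_zc andbT; apply: contraNneq cP => <-; rewrite -ez.
have c_gt0 : (0 < c)%N := leq_ltn_trans (leq0n _) lt_zc.
have zc1 : succeq (axis_point c.-1) z by rewrite ez; apply: axis_point_succeq; rewrite -ltnS prednK.
case/MsetP: zM => _ /(_ _ (@belowP c.-1 _) zc1) -> //; first by rewrite eqxx.
by rewrite ltn_predL.
Qed.

End FirstMissingAxisPoint.

Lemma lower_extend1 P : lower P ->
  exists P', [/\ lower P', #|` P'| = #|` P|.+1 & (#|` Mset P| <= #|` Mset P'|)%N].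
Proof.
move=> lowP.
have notinP : exists c, axis_point c \notin P.
  exists (\max_(p <- P) p i0).+1; apply/negP => inP.
  have := @leq_bigmax_seq _ _ predT (fun p : point d => p i0) _ inP isT.
  by rewrite axis_point_i0 ltnn.
case: (ex_minnP notinP) => c cP cmin.
have belowP c' : (c' < c)%N -> axis_point c' \in P.
  by move=> lt_c'c; apply: contraLR lt_c'c => /cmin; rewrite -leqNgt.
exists (axis_point c |` P); split; first exact: lower_fset1U_axis_point.
  by rewrite cardfsU1 cP.
have := fsubset_leq_card (Mset_axis_fset1U cP belowP).
rewrite cardfsU1 (cardfsD1 (axis_point c) (Mset (axis_point c |` P))).
by rewrite (Mset_fset1U_notin lowP cP); lia.
Qed.

Lemma lower_extend n P : lower P -> (#|` P| <= n)%N ->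
  exists P', [/\ lower P', #|` P'| = n & (#|` Mset P| <= #|` Mset P'|)%N].
Proof.
move=> lowP /subnK <-; elim: (n - #|` P|)%N => [|r [P' [lowP' cardP' MP']]]; first by exists P.
have [P'' [lowP'' cardP'' MP'']] := lower_extend1 lowP'.
by exists P''; split=> //; [rewrite cardP'' cardP' | exact: leq_trans MP' MP''].
Qed.

End Extension.

Section ExpBounds.
Local Open Scope R_scope.

Lemma exp_pow x n : exp x ^ n = exp (INR n * x).
Proof.
elim: n => [|n IHn]; first by rewrite Rmult_0_l exp_0.
by rewrite S_INR /= IHn -exp_plus; congr exp; ring.
Qed.

Lemma INR_expn a b : INR (a ^ b)%N = INR a ^ b.
Proof. by elim: b => // b IHb; rewrite expnS mult_INR IHb. Qed.

Lemma pow_1plus_le_exp y n : 0 <= y -> (1 + y) ^ n <= exp (INR n * y).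
Proof. by move=> y_ge0; rewrite -exp_pow; apply: pow_incr; have := exp_ineq1_le y; lra. Qed.

Lemma pow_le_exp_fact m : INR m.+1 ^ m.+1 <= exp 1 ^ m * INR m.+1`!.
Proof.
elim: m => [|m IHm]; first by rewrite /= !Rmult_1_r; lra.
have m_gt0 : 0 < INR m.+1 by apply: lt_0_INR; apply/ltP.
have succ_pow : INR m.+2 ^ m.+1 <= exp 1 * INR m.+1 ^ m.+1.
  have -> : INR m.+2 = INR m.+1 * (1 + / INR m.+1) by rewrite (S_INR m.+1); field; lra.
  rewrite Rpow_mult_distr Rmult_comm; apply: Rmult_le_compat_r; first by apply: pow_le; lra.
  have := pow_1plus_le_exp (m.+1) (Rlt_le _ _ (Rinv_0_lt_compat _ m_gt0)).
  by rewrite Rinv_r; lra.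
have m2_ge0 : 0 <= INR m.+2 := pos_INR _.
have e_ge0 : 0 <= exp 1 := Rlt_le _ _ (exp_pos 1).
rewrite factS mult_INR -tech_pow_Rmult.
apply: Rle_trans (Rmult_le_compat_l _ _ _ m2_ge0 succ_pow) _.
rewrite -Rmult_assoc.
apply: Rle_trans (Rmult_le_compat_l _ _ _ (Rmult_le_pos _ _ m2_ge0 e_ge0) IHm) _.
by right; rewrite -tech_pow_Rmult; ring.
Qed.

Lemma binomial_ratio_bound (C t k : nat) : (0 < k)%N -> (C * k`! <= (t + k) ^ k)%N ->
  INR C < (exp 1 * (INR t + INR k) / INR k) ^ k.
Proof.
case: k => // m _ le_Cfact.
set K := INR m.+1; set S := INR t + K.
have K_gt0 : 0 < K by apply: lt_0_INR; apply/ltP.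
have S_gt0 : 0 < S by have := pos_INR t; rewrite /S; lra.
have Kpow_gt0 : 0 < K ^ m.+1 := pow_lt _ _ K_gt0.
have epow_gt0 : 0 < exp 1 ^ m := pow_lt _ _ (exp_pos 1).
have le_Cfact_R : INR C * INR m.+1`! <= S ^ m.+1.
  by rewrite -mult_INR /S /K -plus_INR -INR_expn; apply: le_INR; apply/leP.
rewrite /Rdiv !Rpow_mult_distr pow_inv -/K.
apply: (Rmult_lt_reg_r (K ^ m.+1)) => //; rewrite Rmult_assoc Rinv_l; last lra.
apply: Rle_lt_trans (_ : _ <= INR C * (exp 1 ^ m * INR m.+1`!)) _.
  by apply: Rmult_le_compat_l; [apply: pos_INR | apply: pow_le_exp_fact].
rewrite Rmult_1_r.
apply: Rle_lt_trans (_ : _ <= exp 1 ^ m * S ^ m.+1) _.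
  rewrite -Rmult_assoc (Rmult_comm (INR C)) Rmult_assoc.
  by apply: Rmult_le_compat_l; first lra.
apply: Rmult_lt_compat_r; first exact: pow_lt.
by apply: Rlt_pow; [have := exp_ineq1_le 1; lra | apply/ltP].
Qed.

Lemma exp1_ratio_le_max t K : 0 <= t -> 0 < K ->
  exp 1 * (t + K) / K <= Rmax 8 (4 * exp 1 * t / K).
Proof.
move=> t_ge0 K_gt0; have e_le3 := exp_le_3; have e_gt0 := exp_pos 1.
have r_ge0 : 0 <= t / K by apply: Rmult_le_pos; [lra | left; apply: Rinv_0_lt_compat].
have -> : exp 1 * (t + K) / K = exp 1 * (t / K) + exp 1 by field; lra.
have -> : 4 * exp 1 * t / K = 4 * exp 1 * (t / K) by rewrite /Rdiv; ring.
case: (Rle_or_lt (1 / 3) (t / K)) => r13.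
  by apply: Rle_trans (Rmax_r _ _); nra.
by apply: Rle_trans (Rmax_l _ _); nra.
Qed.
End ExpBounds.

Unset Implicit Arguments.
Local Open Scope R_scope.

Theorem lemma2 (d : nat) (Q : {fset point d}) (n k t : nat) :
  (1 <= d)%N -> lower Q -> #|` Q|%N = n -> (0 < k)%N -> is_T d n t ->
  INR (Ccount Q k) < Rmax 8 (4 * exp 1 * INR t / INR k) ^ k.
Proof.
move=> d_gt0 lowQ cardQ k_gt0 [_ maxT].
have MsetT P : lower P -> P `<=` Q -> (#|` Mset P| <= t)%N.
  move=> lowP PQ; have le_Pn : (#|` P| <= n)%N by rewrite -cardQ fsubset_leq_card.
  have [P' [lowP' cardP' MP']] := lower_extend (Ordinal d_gt0) lowP le_Pn.
  exact: leq_trans MP' (maxT P' lowP' cardP').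
have le_Ccount : (Ccount Q k * k`! <= (t + k) ^ k)%N.
  have := card_lower_subsets MsetT k lowQ (fsubset_refl Q) (fsubset_refl (Mset Q)).
  rewrite -Ccount_lower_subsets subnKC ?MsetT // => le_Ccount.
  by rewrite (leq_trans (leq_mul le_Ccount (leqnn _))) // bin_ffact leq_ffact_exp.
apply: Rlt_le_trans (binomial_ratio_bound k_gt0 le_Ccount) _.
have k_gt0R : 0 < INR k by apply: lt_0_INR; apply/ltP.
apply: pow_incr; split; last by apply: exp1_ratio_le_max; first exact: pos_INR.
apply: Rmult_le_pos; last exact/Rlt_le/Rinv_0_lt_compat.
by have := pos_INR t; have := exp_pos 1; nra.
Qed.
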